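(* Let $\mathcal H$ be a finite-dimensional Hilbert space and let $|\psi\rangle\in(\mathbb{C}^2)^{\otimes n}\otimes\mathcal H$ be a unit vector of the form \[ |\psi\rangle=\big(\alpha|0^n\rangle+\delta|v_1\rangle+\beta|v_{\ge2}\rangle\big)\otimes|g\rangle+\gamma|\perp\rangle, \] where $\alpha,\beta,\delta,\gamma$ are nonnegative reals; $|v_1\rangle,|v_{\ge2}\rangle\in(\mathbb{C}^2)^{\otimes n}$, $|g\rangle\in\mathcal H$ and $|\perp\rangle$ are unit vectors; $|v_1\rangle$ is supported only on computational basis strings of Hamming weight $1$; $|v_{\ge2}\rangle$ is supported only on strings of Hamming weight at least $2$; and $|\perp\rangle$ is orthogonal to every vector of the form $|0^n\rangle\otimes|h\rangle$ ($|h\rangle\in\mathcal H$) and to every vector of the form $|x\rangle\otimes|g\rangle$ ($|x\rangle\in(\mathbb{C}^2)^{\otimes n}$). Suppose $\alpha^2=2/3+c$ with $c\ge0$. Then for every pure product state $|\pi\rangle=|\pi_1\rangle\otimes\cdots\otimes|\pi_n\rangle$ on $n$ qubits, \[ \big\|(\langle\pi|\otimes I)|\psi\rangle\big\|_2^2\le\Big(\alpha+\min\Big\{\delta,\sqrt{\tfrac{2}{27}}\,\tfrac{\delta^2}{c}\Big\}\Big)^2, \] where for $c=0$ the minimum is interpreted as $\delta$.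
   Context: $|0^n\rangle$ is the all-zeros computational basis state of $n$ qubits; $I$ is the identity on $\mathcal H$. *)

(* Scalars: an arbitrary numeric algebraically closed field C
   (e.g. algC, or complex numbers); the paper's case is C = complex numbers. *)
From HB Require Import structures.
From mathcomp Require Import all_boot all_order all_algebra.
Set Implicit Arguments. Unset Strict Implicit. Unset Printing Implicit Defensive.
Import Order.TTheory GRing.Theory Num.Theory.
Export Num.Def.
Local Open Scope ring_scope.

Definition bits (n : nat) := {ffun 'I_n -> bool}.

Definition hweight (n : nat) (x : bits n) : nat := #|[set i | x i]|.

Definition zeros (n : nat) : bits n := [ffun _ => false].

Section Vec.
Variable C : numClosedFieldType.

(* vectors are functions from a finite basis to C *)
Definition dotv (T : finType) (u v : T -> C) : C := \sum_(t : T) (u t)^* * v t.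
Definition normsq (T : finType) (u : T -> C) : C := \sum_(t : T) `|u t| ^+ 2.

(* vectors of (C^2)^{⊗n} ⊗ H with H = C^m: indexed by bits n * 'I_m *)
Definition tensv (n m : nat) (q : bits n -> C) (h : 'I_m -> C) : bits n * 'I_m -> C :=
  fun p => q p.1 * h p.2.

Definition ket0 (n : nat) : bits n -> C := fun x => (x == zeros n)%:R.

Definition prodstate (n : nat) (pi : 'I_n -> bool -> C) : bits n -> C :=
  fun x => \prod_(k < n) pi k (x k).

(* partial inner product (<pi| ⊗ I)|psi>, a vector of H *)
Definition partial_apply (n m : nat) (phi : bits n -> C) (psi : bits n * 'I_m -> C)
  : 'I_m -> C := fun i => \sum_(x : bits n) (phi x)^* * psi (x, i).
End Vec.

From HB Require Import structures.
From mathcomp Require Import all_boot all_order all_algebra.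
From mathcomp Require Import ring lra.
Import Order.TTheory GRing.Theory Num.Theory Num.Def.
Local Open Scope ring_scope.
Set Implicit Arguments. Unset Strict Implicit. Unset Printing Implicit Defensive.

(* Put |a> := alpha|0^n> + delta|v_1> + beta|v_{>=2}>. As |perp> is orthogonal to
   every |x>|g>, the vector (<pi| (x) I)|psi> = <pi|a> |g> + gamma (<pi| (x) I)|perp>
   is an orthogonal sum; as |perp> vanishes on 0^n, its second part has squared norm
   at most gamma^2 (1 - x^2), where x = |<pi|0^n>|.  Let y^2 and z^2 be the weights of
   |pi> on strings of Hamming weight 1 and >= 2; Cauchy-Schwarz gives
   |<pi|a>| <= alpha x + delta y + beta z.  For a product state the weight of a single
   flipped bit is large, 2 x^2 (1 - x^2) <= y^2 (1 + x^2), whence z <= sqrt 2 (1 - x).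
   What remains is an inequality between real numbers: with k = sqrt (2/27) the whole
   bound is at most (alpha - 27/8 k c (1 - x^2) + delta y)^2, which in turn is at most
   both (alpha + delta)^2 and, maximizing over y, (alpha + k delta^2 / c)^2. *)

(** * Real inequalities *)

Section RealInequalities.
Variable R : realFieldType.

(* For independent bits with P(bit i = 0) = a i, p is the probability of all zeros
   and the sum that of exactly one 1. *)
Lemma exactly_one_mass_ge (I : eqType) (r : seq I) (a b : I -> R) :
  uniq r -> (forall i, 0 <= a i) -> (forall i, 0 <= b i) -> (forall i, a i + b i = 1) ->
  let p := \prod_(i <- r) a i in
  2 * p * (1 - p) <= (\sum_(i <- r) b i * \prod_(j <- r | j != i) a j) * (1 + p).
Proof.
move=> + a0 b0 ab1; elim: r => [|i r IH] /=; first by rewrite !big_nil; lra.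
case/andP=> ir /IH {}IH.
have pE : \prod_(j <- r | j != i) a j = \prod_(j <- r) a j.
  rewrite big_seq_cond [RHS]big_seq_cond; apply: eq_bigl => k.
  by case: (boolP (k \in r)) => //= kr; apply: contraNneq ir => <-.
have PE : \sum_(j <- r) b j * \prod_(k <- i :: r | k != j) a k =
          a i * \sum_(j <- r) b j * \prod_(k <- r | k != j) a k.
  rewrite mulr_sumr big_seq [RHS]big_seq; apply: eq_bigr => j jr.
  have ij : i != j by apply: contraNneq ir => ->.
  by rewrite big_cons ij mulrCA.
rewrite !big_cons eqxx /= pE PE.
move: IH => /=; set p := \prod_(j <- r) a j; set P := \sum_(j <- r) _ => IH.
have p0 : 0 <= p by apply: prodr_ge0.
have p1 : p <= 1.
  by apply: prodr_ile1 => j _; rewrite a0 /=; have := b0 j; have := ab1 j; lra.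
have P0 : 0 <= P by apply: sumr_ge0 => j _; apply: mulr_ge0 => //; apply: prodr_ge0.
(* Times 1 + p, the new gap is a multiple of the inductive one plus a nonnegative term. *)
rewrite -subr_ge0 -(pmulr_rge0 _ (_ : 0 < 1 + p)); last by lra.
have bE : b i = 1 - a i by have := ab1 i; lra.
have -> : (1 + p) * ((b i * p + a i * P) * (1 + a i * p) - 2 * (a i * p) * (1 - a i * p)) =
    a i * (1 + a i * p) * (P * (1 + p) - 2 * p * (1 - p))
    + p * b i * (b i * (1 + p) + a i * (1 - p) ^+ 2) by rewrite bE; ring.
have ai0 := a0 i; have bi0 := b0 i.
apply: addr_ge0; apply: mulr_ge0.
- by apply: mulr_ge0 => //; apply: addr_ge0 => //; apply: mulr_ge0.
- by rewrite subr_ge0.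
- exact: mulr_ge0.
- by apply: addr_ge0; apply: mulr_ge0; rewrite ?sqr_ge0 //; lra.
Qed.

Lemma residual_amplitude_le (x y z r : R) : 0 <= x -> 0 <= z -> 0 <= r -> r ^+ 2 = 2 ->
  x ^+ 2 + y ^+ 2 + z ^+ 2 = 1 -> 2 * x ^+ 2 * (1 - x ^+ 2) <= y ^+ 2 * (1 + x ^+ 2) ->
  z <= r * (1 - x).
Proof.
move=> x0 z0 r0 r2 sum1 flip.
have x2_le : x ^+ 2 <= 1 by have := sqr_ge0 y; have := sqr_ge0 z; lra.
have x1 : x <= 1 by nra.
have z2 : z ^+ 2 * (1 + x ^+ 2) <= (1 - x ^+ 2) ^+ 2 by nra.
rewrite -ler_sqr ?nnegrE ?mulr_ge0 ?subr_ge0 // exprMn r2.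
nra.
Qed.

Lemma sqr_affine_le_envelope (al a ga lam w : R) : 0 <= w <= 1 ->
  0 <= al * a - 2 * al * lam - ga ^+ 2 -> 0 <= 2 * al * a - 2 * al * lam - a ^+ 2 - ga ^+ 2 ->
  (al - a * w) ^+ 2 + ga ^+ 2 * (w * (2 - w)) <= (al - lam * (w * (2 - w))) ^+ 2.
Proof.
case/andP=> w0 w1 L0 L1; rewrite -subr_ge0.
have -> : (al - lam * (w * (2 - w))) ^+ 2 - ((al - a * w) ^+ 2 + ga ^+ 2 * (w * (2 - w))) =
    w * ((1 - w) * 2 * (al * a - 2 * al * lam - ga ^+ 2)
         + w * (2 * al * a - 2 * al * lam - a ^+ 2 - ga ^+ 2) + lam ^+ 2 * (2 - w) ^+ 2 * w).
  by ring.
apply: mulr_ge0 => //; apply: addr_ge0; first apply: addr_ge0.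
- by apply: mulr_ge0 => //; apply: mulr_ge0; lra.
- exact: mulr_ge0.
- by apply: mulr_ge0 => //; apply: mulr_ge0; apply: sqr_ge0.
Qed.

Lemma envelope_coef1_ge0 (al be ga c k r q : R) : 0 <= c -> 0 <= al -> 0 <= be -> 0 <= k ->
  0 <= r -> 0 <= q -> k ^+ 2 = 2 / 27 -> al ^+ 2 = 2 / 3 + c ->
  be ^+ 2 + ga ^+ 2 <= 1 / 3 - c -> r ^+ 2 = 2 -> q ^+ 2 = 1 / 3 - c ->
  0 <= al * (al - r * be) - 2 * al * (27 / 8 * k * c) - ga ^+ 2.
Proof.
(* The worst case is be = q, where the claim reduces to 27/4 k c <= al - r q. *)
move=> c0 al0 be0 k0 r0 q0 k2 al2 tail r2 q2.
have c_le : c <= 1 / 3 by have := sqr_ge0 be; have := sqr_ge0 ga; lra.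
have rq_le : 27 / 4 * k * c <= al - r * q.
  have al_gt0 : 0 < al.
    have : 0 < al * al by rewrite -expr2; lra.
    nra.
  have sum_gt0 : 0 < al + r * q by have := mulr_ge0 r0 q0; lra.
  have S9 : 9 * k * (al + r * q) <= 4.
    rewrite -ler_sqr ?nnegrE ?mulr_ge0 ?addr_ge0 ?mulr_ge0 //.
    rewrite (_ : (9 * k * (al + r * q)) ^+ 2
                 = 81 * k ^+ 2 * (2 * (al ^+ 2 + r ^+ 2 * q ^+ 2) - (al - r * q) ^+ 2)).
      by rewrite k2 r2 q2 al2; have := sqr_ge0 (al - r * q); lra.
    by ring.
  rewrite -(ler_pM2r sum_gt0) (_ : (al - r * q) * (al + r * q) = 3 * c); last first.
    by rewrite -subr_sqr exprMn r2 q2 al2; ring.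
  nra.
have qr : 2 * q <= r * al.
  by rewrite -ler_sqr ?nnegrE ?mulr_ge0 // !exprMn r2 q2 al2; lra.
have be_q : be <= q by rewrite -ler_sqr ?nnegrE // q2; have := sqr_ge0 ga; lra.
have : 0 <= (q - be) * (r * al - q - be) by apply: mulr_ge0; lra.
have : 0 <= al * (al - r * q - 27 / 4 * k * c) by apply: mulr_ge0; lra.
by have := sqr_ge0 ga; lra.
Qed.

Lemma envelope_coef2_ge0 (al be ga c k r : R) : 0 <= c -> 0 <= al -> 0 <= k ->
  k ^+ 2 = 2 / 27 -> al ^+ 2 = 2 / 3 + c -> be ^+ 2 + ga ^+ 2 <= 1 / 3 - c -> r ^+ 2 = 2 ->
  0 <= 2 * al * (al - r * be) - 2 * al * (27 / 8 * k * c) - (al - r * be) ^+ 2 - ga ^+ 2.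
Proof.
move=> c0 al0 k0 k2 al2 tail r2.
have c_le : c <= 1 / 3 by have := sqr_ge0 be; have := sqr_ge0 ga; lra.
have kal : 9 * k * al <= 3.
  rewrite -ler_sqr ?nnegrE ?mulr_ge0 //.
  rewrite (_ : (9 * k * al) ^+ 2 = 81 * k ^+ 2 * al ^+ 2); last by ring.
  by rewrite k2 al2; lra.
have -> : 2 * al * (al - r * be) - 2 * al * (27 / 8 * k * c) - (al - r * be) ^+ 2 - ga ^+ 2
    = al ^+ 2 - r ^+ 2 * be ^+ 2 - 3 / 4 * c * (9 * k * al) - ga ^+ 2 by field.
rewrite r2 al2; nra.
Qed.

Lemma overlap_sq_le_slack (x y z al be ga de c k A G : R) :
  (forall t : R, 0 <= t -> exists2 s : R, 0 <= s & s ^+ 2 = t) ->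
  0 <= x -> 0 <= y -> 0 <= z -> 0 <= al -> 0 <= be -> 0 <= ga -> 0 <= de ->
  0 <= c -> 0 <= k -> 0 <= A ->
  k ^+ 2 = 2 / 27 -> al ^+ 2 = 2 / 3 + c -> al ^+ 2 + be ^+ 2 + ga ^+ 2 + de ^+ 2 = 1 ->
  x ^+ 2 + y ^+ 2 + z ^+ 2 = 1 -> 2 * x ^+ 2 * (1 - x ^+ 2) <= y ^+ 2 * (1 + x ^+ 2) ->
  A <= al * x + de * y + be * z -> G <= 1 - x ^+ 2 ->
  let T := al - 27 / 8 * k * c * (1 - x ^+ 2) in
  0 <= T /\ A ^+ 2 + ga ^+ 2 * G <= (T + de * y) ^+ 2.
Proof.
move=> sqrt_ex x0 y0 z0 al0 be0 ga0 de0 c0 k0 A0 k2 al2 amp1 xyz flip A_le G_le T.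
have tail : be ^+ 2 + ga ^+ 2 <= 1 / 3 - c by have := sqr_ge0 de; lra.
have [r r0 r2] := sqrt_ex 2 (ler0n _ 2).
have [q q0 q2] : exists2 q, 0 <= q & q ^+ 2 = 1 / 3 - c.
  by apply: sqrt_ex; have := sqr_ge0 be; have := sqr_ge0 ga; lra.
have x2_le : x ^+ 2 <= 1 by have := sqr_ge0 y; have := sqr_ge0 z; lra.
have x1 : x <= 1 by nra.
have w01 : 0 <= 1 - x <= 1 by apply/andP; split; lra.
have env := sqr_affine_le_envelope w01
  (envelope_coef1_ge0 c0 al0 be0 k0 r0 q0 k2 al2 tail r2 q2)
  (envelope_coef2_ge0 c0 al0 k0 k2 al2 tail r2).
rewrite (_ : (1 - x) * (2 - (1 - x)) = 1 - x ^+ 2) in env; last by ring.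
(* z <= r (1 - x) makes al x + be z an affine function of w = 1 - x. *)
have u_le : al * x + be * z <= al - (al - r * be) * (1 - x).
  by have := ler_wpM2l be0 (residual_amplitude_le x0 z0 r0 r2 xyz flip); lra.
have T0 : 0 <= T.
  have : 9 * k <= 3 by nra.
  have : 3 / 8 <= al by nra.
  have : 0 <= x ^+ 2 by apply: sqr_ge0.
  have : c <= 1 / 3 by have := sqr_ge0 be; have := sqr_ge0 ga; lra.
  rewrite /T; nra.
have u0 : 0 <= al * x + be * z by rewrite addr_ge0 ?mulr_ge0.
have u_T : (al * x + be * z) ^+ 2 + ga ^+ 2 * (1 - x ^+ 2) <= T ^+ 2.
  by apply: le_trans env; rewrite lerD2r ler_sqr ?nnegrE //; lra.
have gx0 : 0 <= ga ^+ 2 * (1 - x ^+ 2) by rewrite mulr_ge0 ?sqr_ge0 ?subr_ge0.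
have uT : al * x + be * z <= T by rewrite -ler_sqr ?nnegrE //; lra.
split=> //.
have dy0 : 0 <= de * y := mulr_ge0 de0 y0.
have : A ^+ 2 <= (al * x + be * z + de * y) ^+ 2.
  by rewrite ler_sqr ?nnegrE ?addr_ge0 ?mulr_ge0 //; lra.
have : ga ^+ 2 * G <= ga ^+ 2 * (1 - x ^+ 2) by apply: ler_wpM2l => //; apply: sqr_ge0.
have := ler_wpM2r dy0 uT.
move: u_T; rewrite !sqrrD; lra.
Qed.

Lemma overlap_sq_le_real (x y z al be ga de c k A G : R) :
  (forall t : R, 0 <= t -> exists2 s : R, 0 <= s & s ^+ 2 = t) ->
  0 <= x -> 0 <= y -> 0 <= z -> 0 <= al -> 0 <= be -> 0 <= ga -> 0 <= de ->
  0 <= c -> 0 <= k -> 0 <= A ->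
  k ^+ 2 = 2 / 27 -> al ^+ 2 = 2 / 3 + c -> al ^+ 2 + be ^+ 2 + ga ^+ 2 + de ^+ 2 = 1 ->
  x ^+ 2 + y ^+ 2 + z ^+ 2 = 1 -> 2 * x ^+ 2 * (1 - x ^+ 2) <= y ^+ 2 * (1 + x ^+ 2) ->
  A <= al * x + de * y + be * z -> G <= 1 - x ^+ 2 ->
  A ^+ 2 + ga ^+ 2 * G <= (al + de) ^+ 2 /\
  (0 < c -> A ^+ 2 + ga ^+ 2 * G <= (al + k * de ^+ 2 / c) ^+ 2).
Proof.
move=> sqrt_ex x0 y0 z0 al0 be0 ga0 de0 c0 k0 A0 k2 al2 amp1 xyz flip A_le G_le.
have [T0 HT] := overlap_sq_le_slack sqrt_ex x0 y0 z0 al0 be0 ga0 de0 c0 k0 A0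
  k2 al2 amp1 xyz flip A_le G_le.
set T := al - _ in T0 HT.
have y2_le : y ^+ 2 <= 1 - x ^+ 2 by have := sqr_ge0 z; lra.
have lam0 : 0 <= 27 / 8 * k * c by have := mulr_ge0 k0 c0; lra.
have lam_y : 27 / 8 * k * c * y ^+ 2 <= 27 / 8 * k * c * (1 - x ^+ 2) by apply: ler_wpM2l.
have dy0 : 0 <= de * y by apply: mulr_ge0.
have Ty_le : T + de * y <= al + de.
  have : de * y <= de by rewrite ler_piMr //; nra.
  by have := mulr_ge0 lam0 (sqr_ge0 y); rewrite /T; lra.
have Ty_le_ratio : 0 < c -> T + de * y <= al + k * de ^+ 2 / c.
  move=> c_gt0; have k_gt0 : 0 < k.
    by rewrite lt_neqAle k0 andbT; apply/eqP => k_eq0; move: k2; rewrite -k_eq0 expr0n /=; lra.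
  have kc_gt0 : 0 < 4 * k * c by rewrite !mulr_gt0.
  (* AM-GM in y: the scaled gap is a perfect square because 27 k^2 = 2. *)
  suff : 0 <= 4 * k * c * (k * de ^+ 2 / c - de * y + 27 / 8 * k * c * y ^+ 2).
    by rewrite pmulr_rge0 // /T; lra.
  have -> : 4 * k * c * (k * de ^+ 2 / c - de * y + 27 / 8 * k * c * y ^+ 2)
      = (2 * k * de - c * y) ^+ 2 + (27 / 2 * k ^+ 2 - 1) * c ^+ 2 * y ^+ 2.
    by field; rewrite gt_eqF.
  by rewrite k2; have := sqr_ge0 (2 * k * de - c * y); lra.
have Ty0 : 0 <= T + de * y by lra.
by split=> [|/Ty_le_ratio ?]; apply: (le_trans HT); rewrite ler_sqr ?nnegrE //; lra.
Qed.

End RealInequalities.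

(** * The real subfield of a numeric closed field *)

(* The scalar field C is only partially ordered; its real elements form a real
   field, in which [lra] and [nra] apply. *)
Section RealSubfield.
Variable C : numClosedFieldType.

Definition creal := {x : C | x \is Num.real}.

HB.instance Definition _ := [isSub of creal for (@sval C (fun x => x \is Num.real))].
HB.instance Definition _ := [Choice of creal by <:].
HB.instance Definition _ := [SubChoice_isSubZmodule of creal by <:].
HB.instance Definition _ := [SubZmodule_isSubNzRing of creal by <:].
HB.instance Definition _ := [SubNzRing_isSubComNzRing of creal by <:].
HB.instance Definition _ := [SubNzRing_isSubUnitRing of creal by <:].
HB.instance Definition _ := [SubComUnitRing_isSubIntegralDomain of creal by <:].
HB.instance Definition _ := [SubIntegralDomain_isSubField of creal by <:].

Let le (x y : creal) := val x <= val y.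
Let lt (x y : creal) := val x < val y.
Let norm (x : creal) : creal := if 0 <= val x then x else - x.

Let le0_add x y : le 0 x -> le 0 y -> le 0 (x + y). Proof. exact: addr_ge0. Qed.
Let le0_mul x y : le 0 x -> le 0 y -> le 0 (x * y). Proof. exact: mulr_ge0. Qed.
Let le0_anti x : le 0 x -> le x 0 -> x = 0.
Proof. by move=> ? ?; apply: val_inj; apply/eqP; rewrite eq_le; apply/andP. Qed.
Let sub_ge0 x y : le 0 (y - x) = le x y. Proof. exact: subr_ge0. Qed.
Let le0_total x : le 0 x || le x 0. Proof. by rewrite /le -realE; case: x. Qed.
Let normN x : norm (- x) = norm x.
Proof.
rewrite /norm /= oppr_ge0 opprK; have := valP x; rewrite realE.
case: (boolP (0 <= val x)) => x0; case: (boolP (val x <= 0)) => x0' // _.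
have x_eq0 : val x = 0 by apply/eqP; rewrite eq_le x0 x0'.
by apply: val_inj; rewrite /= x_eq0 oppr0.
Qed.
Let ge0_norm x : le 0 x -> norm x = x. Proof. by rewrite /le /norm => ->. Qed.
Let lt_def x y : lt x y = (y != x) && le x y. Proof. exact: lt_def. Qed.

HB.instance Definition _ := Num.IntegralDomain_isLeReal.Build creal
  le0_add le0_mul le0_anti sub_ge0 le0_total normN ge0_norm lt_def.

Lemma creal_leE (x y : creal) : (x <= y) = (val x <= val y). Proof. by []. Qed.

Lemma creal_lift (x : C) : x \is Num.real -> exists y : creal, val y = x.
Proof. by move=> xr; exists (Sub x xr). Qed.

Lemma creal_sqrt (t : creal) : 0 <= t -> exists2 s : creal, 0 <= s & s ^+ 2 = t.
Proof.
move=> t0; have s0 : 0 <= sqrtC (val t) by rewrite sqrtC_ge0.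
exists (Sub (sqrtC (val t)) (sqrtC_real t0)); first exact: s0.
by apply: val_inj; rewrite rmorphXn /= sqrtCK.
Qed.
End RealSubfield.

Lemma overlap_sq_le (C : numClosedFieldType) (x y z al be ga de c A G : C) :
  0 <= x -> 0 <= y -> 0 <= z -> 0 <= al -> 0 <= be -> 0 <= ga -> 0 <= de ->
  0 <= c -> 0 <= A -> 0 <= G ->
  al ^+ 2 = 2 / 3 + c -> al ^+ 2 + be ^+ 2 + ga ^+ 2 + de ^+ 2 = 1 ->
  x ^+ 2 + y ^+ 2 + z ^+ 2 = 1 -> 2 * x ^+ 2 * (1 - x ^+ 2) <= y ^+ 2 * (1 + x ^+ 2) ->
  A <= al * x + de * y + be * z -> G <= 1 - x ^+ 2 ->
  A ^+ 2 + ga ^+ 2 * G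
  <= (al + (if c == 0 then de else Num.min de (sqrtC (2 / 27) * de ^+ 2 / c))) ^+ 2.
Proof.
have : 0 <= sqrtC (2 / 27 : C) /\ sqrtC (2 / 27 : C) ^+ 2 = 2 / 27.
  by rewrite sqrtCK sqrtC_ge0 divr_ge0 ?ler0n.
move: (sqrtC _) => k [k0 k2] x0 y0 z0 al0 be0 ga0 de0 c0 A0 G0 al2 amp1 xyz flip A_le G_le.
case: (creal_lift (ger0_real x0)) => xR ?; subst x.
case: (creal_lift (ger0_real y0)) => yR ?; subst y.
case: (creal_lift (ger0_real z0)) => zR ?; subst z.
case: (creal_lift (ger0_real al0)) => alR ?; subst al.
case: (creal_lift (ger0_real be0)) => beR ?; subst be.
case: (creal_lift (ger0_real ga0)) => gaR ?; subst ga.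
case: (creal_lift (ger0_real de0)) => deR ?; subst de.
case: (creal_lift (ger0_real c0)) => cR ?; subst c.
case: (creal_lift (ger0_real k0)) => kR ?; subst k.
case: (creal_lift (ger0_real A0)) => AR ?; subst A.
case: (creal_lift (ger0_real G0)) => GR ?; subst G.
(* Orders and operations of creal C unfold to those of C, so the hypotheses over C
   are used as they are; only equations need val_inj. *)
have k2' : kR ^+ 2 = 2 / 27 by apply: val_inj.
have al2' : alR ^+ 2 = 2 / 3 + cR by apply: val_inj.
have amp1' : alR ^+ 2 + beR ^+ 2 + gaR ^+ 2 + deR ^+ 2 = 1 by apply: val_inj.
have xyz' : xR ^+ 2 + yR ^+ 2 + zR ^+ 2 = 1 by apply: val_inj.
have [le_sum le_ratio] := overlap_sq_le_real (@creal_sqrt C) x0 y0 z0 al0 be0 ga0 de0 c0 k0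
  A0 k2' al2' amp1' xyz' flip A_le G_le.
case: eqP => [_|/eqP c_neq0]; first exact: le_sum.
have c_gt0 : 0 < val cR by rewrite lt_def c_neq0 c0.
by rewrite /Order.min; case: ifP => _; [exact: le_sum | exact: le_ratio c_gt0].
Qed.

(** * Vectors *)

Section Vectors.
Variable C : numClosedFieldType.
Implicit Types (T : finType).

Lemma normsq_ge0 T (u : T -> C) : 0 <= normsq u.
Proof. by apply: sumr_ge0 => t _; apply: exprn_ge0. Qed.

Lemma dotvv T (u : T -> C) : dotv u u = normsq u.
Proof. by apply: eq_bigr => t _; rewrite normCKC. Qed.

Lemma normsq_eq0 T (u : T -> C) : normsq u = 0 -> forall t, u t = 0.
Proof.
move/eqP; rewrite psumr_eq0 => [/allP u0 t|t _]; last exact: exprn_ge0.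
by apply/eqP; rewrite -normr_eq0 -sqrf_eq0; apply: u0 (mem_index_enum t).
Qed.

Lemma normsqZ T (a : C) (u : T -> C) : normsq (fun t => a * u t) = `|a| ^+ 2 * normsq u.
Proof. by rewrite /normsq mulr_sumr; apply: eq_bigr => t _; rewrite normrM exprMn. Qed.

Lemma dotvZl T (a : C) (u v : T -> C) : dotv (fun t => a * u t) v = a^* * dotv u v.
Proof. by rewrite /dotv mulr_sumr; apply: eq_bigr => t _; rewrite rmorphM mulrA. Qed.

Lemma dotv_disjoint T (u v : T -> C) : (forall t, u t = 0 \/ v t = 0) -> dotv u v = 0.
Proof. by move=> uv; apply: big1 => t _; case: (uv t) => ->; rewrite ?conjC0 ?mul0r ?mulr0. Qed.

Lemma normsqD_orth T (u v : T -> C) (a : C) : 0 <= a -> dotv u v = 0 ->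
  normsq (fun t => u t + a * v t) = normsq u + a ^+ 2 * normsq v.
Proof.
move=> a0 uv; have aJ : a^* = a by apply: geC0_conj.
have pw t : `|u t + a * v t| ^+ 2 = `|u t| ^+ 2 + a * ((u t)^* * v t)
   + a * ((u t)^* * v t)^* + a ^+ 2 * `|v t| ^+ 2.
  by rewrite !normCK !rmorphD !rmorphM /= ?conjCK aJ; ring.
rewrite /normsq (eq_bigr _ (fun t _ => pw t)) !big_split /= -!mulr_sumr.
by rewrite -rmorph_sum -/(dotv u v) uv rmorph0 !mulr0 !addr0.
Qed.

Lemma cauchy_schwarz T (P : pred T) (u v : T -> C) :
  `|\sum_(t | P t) (u t)^* * v t| ^+ 2 <=
  (\sum_(t | P t) `|u t| ^+ 2) * (\sum_(t | P t) `|v t| ^+ 2).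
Proof.
set A := \sum_(t | P t) `|u t| ^+ 2; set B := \sum_(t | P t) `|v t| ^+ 2.
set S := \sum_(t | P t) (u t)^* * v t.
have A0 : 0 <= A by apply: sumr_ge0 => t _; apply: exprn_ge0.
have AJ : A^* = A by apply: geC0_conj.
have pw t : `|A * v t - S * u t| ^+ 2 = A ^+ 2 * `|v t| ^+ 2 - A * S^* * ((u t)^* * v t)
    - A * S * ((u t)^* * v t)^* + `|S| ^+ 2 * `|u t| ^+ 2.
  by rewrite !normCK !rmorphB !rmorphM /= ?conjCK AJ; ring.
have E : \sum_(t | P t) `|A * v t - S * u t| ^+ 2 = A * (A * B - `|S| ^+ 2).
  rewrite (eq_bigr _ (fun t _ => pw t)) !big_split /= !sumrN -!mulr_sumr.
  by rewrite -/A -/B -rmorph_sum -/S !normCK; ring.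
have : 0 <= A * (A * B - `|S| ^+ 2).
  by rewrite -E; apply: sumr_ge0 => t _; apply: exprn_ge0.
have [A_eq0 _|A_neq0] := eqVneq A 0; last first.
  by rewrite pmulr_rge0 ?subr_ge0 // lt_def A_neq0.
suff -> : S = 0 by rewrite normr0 expr0n /= A_eq0 mul0r.
apply: big1 => t Pt; suff -> : u t = 0 by rewrite conjC0 mul0r.
move/eqP: A_eq0; rewrite psumr_eq0 => [/allP /(_ t (mem_index_enum t))|t' _].
  by rewrite Pt /= sqrf_eq0 normr_eq0 => /eqP.
exact: exprn_ge0.
Qed.

Lemma dotv_supp_le T (P : pred T) (u v : T -> C) : (forall t, ~~ P t -> v t = 0) ->
  `|dotv u v| ^+ 2 <= (\sum_(t | P t) `|u t| ^+ 2) * normsq v.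
Proof.
move=> v0; have supp (F : T -> C) :
    (forall t, ~~ P t -> F t = 0) -> \sum_t F t = \sum_(t | P t) F t.
  by move=> F0; rewrite [LHS](bigID P) /= [X in _ + X]big1 ?addr0.
rewrite /dotv /normsq !supp => [|t /v0 ->|t /v0 ->]; rewrite ?mulr0 ?normr0 ?expr0n //.
exact: cauchy_schwarz.
Qed.
End Vectors.

Lemma normC_le_sqrtC (C : numClosedFieldType) (z t : C) : `|z| ^+ 2 <= t -> `|z| <= sqrtC t.
Proof.
move=> zt; have t0 : 0 <= t by apply: le_trans zt; apply: exprn_ge0.
by rewrite -[`|z|]sqrCK // ler_sqrtC ?nnegrE ?exprn_ge0.
Qed.

Lemma sum_pair (R : nmodType) (T1 T2 : finType) (F : T1 * T2 -> R) :
  \sum_(p : T1 * T2) F p = \sum_(x : T1) \sum_(j : T2) F (x, j).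
Proof. by rewrite pair_bigA; apply: eq_bigr => [[]]. Qed.

Section Tensors.
Variables (C : numClosedFieldType) (n m : nat).

Lemma normsq_tensv (q : bits n -> C) (h : 'I_m -> C) :
  normsq (tensv q h) = normsq q * normsq h.
Proof.
rewrite /normsq sum_pair mulr_suml; apply: eq_bigr => x _.
by rewrite mulr_sumr; apply: eq_bigr => i _; rewrite normrM exprMn.
Qed.

Lemma dotv_partial_apply (phi : bits n -> C) (h : 'I_m -> C) (psi : bits n * 'I_m -> C) :
  dotv h (partial_apply phi psi) = dotv (tensv phi h) psi.
Proof.
rewrite /dotv sum_pair exchange_big /=; apply: eq_bigr => i _.
by rewrite mulr_sumr; apply: eq_bigr => x _; rewrite /tensv rmorphM mulrA [_ * _^*]mulrC.
Qed.

Lemma partial_apply_tensvD (phi q : bits n -> C) (h : 'I_m -> C) (a : C)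
    (w : bits n * 'I_m -> C) i :
  partial_apply phi (fun p => tensv q h p + a * w p) i
  = dotv phi q * h i + a * partial_apply phi w i.
Proof.
rewrite /partial_apply /dotv mulr_suml mulr_sumr -big_split /=.
by apply: eq_bigr => x _; rewrite /tensv /=; ring.
Qed.

Lemma partial_apply_ket0 (psi : bits n * 'I_m -> C) i :
  partial_apply (@ket0 C n) psi i = psi (zeros n, i).
Proof.
rewrite /partial_apply (bigD1 (zeros n)) //= big1 => [|x /negbTE x0].
  by rewrite /ket0 eqxx conjC1 mul1r addr0.
by rewrite /ket0 x0 conjC0 mul0r.
Qed.

Lemma orth_ket0_tensv_vanish (psi : bits n * 'I_m -> C) :
  (forall h, dotv (tensv (@ket0 C n) h) psi = 0) -> forall i, psi (zeros n, i) = 0.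
Proof.
(* Test the hypothesis against h := (<0^n| (x) I)|psi> itself. *)
move=> orth i; rewrite -partial_apply_ket0; apply: normsq_eq0.
by rewrite -dotvv dotv_partial_apply orth.
Qed.

Lemma normsq_partial_apply_le (P : pred (bits n)) (phi : bits n -> C)
    (psi : bits n * 'I_m -> C) :
  (forall x i, ~~ P x -> psi (x, i) = 0) ->
  normsq (partial_apply phi psi) <= (\sum_(x | P x) `|phi x| ^+ 2) * normsq psi.
Proof.
move=> psi0; rewrite [normsq psi]sum_pair exchange_big /= mulr_sumr.
apply: ler_sum => i _; exact: (dotv_supp_le _ (fun x => psi0 x i)).
Qed.

Lemma normsq_ket0 : normsq (@ket0 C n) = 1.
Proof.
rewrite /normsq (bigD1 (zeros n)) //= big1 => [|x /negbTE x0].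
  by rewrite /ket0 eqxx normr1 expr1n addr0.
by rewrite /ket0 x0 normr0 expr0n.
Qed.

Lemma dotv_ket0 (u : bits n -> C) :
  dotv u (@ket0 C n) = (u (zeros n))^*.
Proof.
rewrite /dotv (bigD1 (zeros n)) //= big1 => [|x /negbTE x0].
  by rewrite /ket0 eqxx mulr1 addr0.
by rewrite /ket0 x0 mulr0.
Qed.

End Tensors.

(** * Hamming weights and product states *)

Section Bits.
Variable n : nat.

Definition onehot (k : 'I_n) : bits n := [ffun j => j == k].

Lemma onehot_inj : injective onehot.
Proof. by move=> k k' /ffunP /(_ k); rewrite !ffunE eqxx => /esym/eqP. Qed.

Lemma hweight_eq0 (x : bits n) : (hweight x == 0%N) = (x == zeros n).
Proof.
rewrite /hweight cards_eq0; apply/eqP/eqP => [x0|->].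
  apply/ffunP => i; rewrite ffunE; apply: negbTE; apply: contra_eqN x0 => xi.
  by apply/set0Pn; exists i; rewrite inE.
by apply/setP => i; rewrite !inE ffunE.
Qed.

Lemma hweight_zeros : hweight (zeros n) = 0%N.
Proof. by apply/eqP; rewrite hweight_eq0. Qed.

Lemma hweight_eq1 (x : bits n) : (hweight x == 1%N) = (x \in [set onehot k | k : 'I_n]).
Proof.
apply/cards1P/imsetP => [[k xk]|[k _ ->]]; exists k => //.
  by apply/ffunP => i; rewrite ffunE -(in_set1 i k) -xk inE.
by apply/setP => i; rewrite !inE ffunE.
Qed.

Lemma sum_hweight1 (R : nmodType) (F : bits n -> R) :
  \sum_(x | hweight x == 1%N) F x = \sum_(k < n) F (onehot k).
Proof.
rewrite (eq_bigl _ _ hweight_eq1) big_imset //.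
by move=> k k' _ _; apply: onehot_inj.
Qed.
End Bits.

Lemma normsq_hweight_split (C : numClosedFieldType) n (u : bits n -> C) :
  normsq u = `|u (zeros n)| ^+ 2 + \sum_(x | hweight x == 1%N) `|u x| ^+ 2
             + \sum_(x | (1 < hweight x)%N) `|u x| ^+ 2.
Proof.
rewrite /normsq (bigD1 (zeros n)) //= (bigID (fun x => hweight x == 1%N)) /= addrA.
congr (_ + _ + _); apply: eq_bigl => x; rewrite -hweight_eq0.
  by case: eqP => // ->.
by case: (hweight x) => [|[|k]].
Qed.

Section ProductStates.
Variables (C : numClosedFieldType) (n : nat) (pi : 'I_n -> bool -> C).
Hypothesis pi1 : forall k, normsq (pi k) = 1.

Lemma normsq_prodstate : normsq (prodstate pi) = 1.
Proof.
rewrite /normsq; under eq_bigr do rewrite /prodstate normr_prod -prodrXl.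
by rewrite -(bigA_distr_bigA (fun k b => `|pi k b| ^+ 2)) big1 // => k _; apply: pi1.
Qed.

Lemma prodstate_zeros :
  `|prodstate pi (zeros n)| ^+ 2 = \prod_k `|pi k false| ^+ 2.
Proof. by rewrite normr_prod -prodrXl; apply: eq_bigr => k _; rewrite ffunE. Qed.

Lemma prodstate_onehot k :
  `|prodstate pi (onehot k)| ^+ 2 = `|pi k true| ^+ 2 * \prod_(j | j != k) `|pi j false| ^+ 2.
Proof.
rewrite normr_prod -prodrXl (bigD1 k) //= ffunE eqxx; congr (_ * _).
by apply: eq_bigr => j /negbTE jk; rewrite ffunE jk.
Qed.

Lemma prodstate_hweight1_mass_ge :
  2 * `|prodstate pi (zeros n)| ^+ 2 * (1 - `|prodstate pi (zeros n)| ^+ 2)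
  <= (\sum_(y | hweight y == 1%N) `|prodstate pi y| ^+ 2)
     * (1 + `|prodstate pi (zeros n)| ^+ 2).
Proof.
rewrite sum_hweight1; under eq_bigr do rewrite prodstate_onehot.
rewrite prodstate_zeros.
have sq_real (z : C) : `|z| ^+ 2 \is Num.real by rewrite ger0_real ?exprn_ge0.
pose a k : creal C := Sub (`|pi k false| ^+ 2) (sq_real (pi k false)).
pose b k : creal C := Sub (`|pi k true| ^+ 2) (sq_real (pi k true)).
have ab1 k : a k + b k = 1.
  by apply: val_inj; rewrite /= -(pi1 k) /normsq big_bool addrC.
have := exactly_one_mass_ge (a := a) (b := b) (index_enum_uniq 'I_n)
  (fun k => exprn_ge0 2 (normr_ge0 (pi k false)))
  (fun k => exprn_ge0 2 (normr_ge0 (pi k true))) ab1.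
rewrite /= creal_leE !(rmorphM, rmorphB, rmorphD, rmorph_prod, rmorph_sum).
under [\sum_(i < n) _]eq_bigr do rewrite rmorphM rmorph_prod.
exact.
Qed.
End ProductStates.

(** * The decomposition of psi *)

Section Decomposition.
Variables (C : numClosedFieldType) (n m : nat).
Variables (v1 v2 : bits n -> C) (g : 'I_m -> C) (perp : bits n * 'I_m -> C).
Variables (alpha beta delta gamma : C).
Hypotheses (al0 : 0 <= alpha) (be0 : 0 <= beta) (de0 : 0 <= delta) (ga0 : 0 <= gamma).
Hypotheses (nv1 : normsq v1 = 1) (nv2 : normsq v2 = 1) (ng : normsq g = 1).
Hypothesis (nperp : normsq perp = 1).
Hypothesis v1_supp : forall x, hweight x != 1%N -> v1 x = 0.
Hypothesis v2_supp : forall x, (hweight x < 2)%N -> v2 x = 0.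
Hypothesis perp_ket0 : forall h, dotv (tensv (@ket0 C n) h) perp = 0.
Hypothesis perp_g : forall q, dotv (tensv q g) perp = 0.

Let low x := alpha * @ket0 C n x + delta * v1 x + beta * v2 x.

Lemma normsq_low_weight : normsq low = alpha ^+ 2 + delta ^+ 2 + beta ^+ 2.
Proof.
have ket0_v1 : dotv (fun x => alpha * @ket0 C n x) v1 = 0.
  apply: dotv_disjoint => x; have [->|x0] := eqVneq x (zeros n).
    by right; apply: v1_supp; rewrite hweight_zeros.
  by left; rewrite /ket0 (negbTE x0) mulr0.
have low_v2 : dotv (fun x => alpha * @ket0 C n x + delta * v1 x) v2 = 0.
  apply: dotv_disjoint => x; case: (ltnP (hweight x) 2) => [/v2_supp|w2]; [by right|left].
  rewrite v1_supp ?gtn_eqF // /ket0 -hweight_eq0 gtn_eqF ?mulr0 ?addr0 //.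
  exact: ltnW.
rewrite /low normsqD_orth // normsqD_orth // normsqZ normsq_ket0 nv1 nv2 ger0_norm //.
by rewrite !mulr1.
Qed.

Variable psi : bits n * 'I_m -> C.
Hypothesis psi_def : forall p, psi p = tensv low g p + gamma * perp p.

Lemma amplitudes_sqr_sum : normsq psi = 1 ->
  alpha ^+ 2 + beta ^+ 2 + gamma ^+ 2 + delta ^+ 2 = 1.
Proof.
have -> : normsq psi = normsq (fun p => tensv low g p + gamma * perp p).
  by apply: eq_bigr => p _; rewrite psi_def.
rewrite normsqD_orth // normsq_tensv normsq_low_weight ng nperp => <-; ring.
Qed.

Variable phi : bits n -> C.
Hypothesis phi1 : normsq phi = 1.

Lemma normsq_partial_psi : normsq (partial_apply phi psi)
  = `|dotv phi low| ^+ 2 + gamma ^+ 2 * normsq (partial_apply phi perp).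
Proof.
have -> : normsq (partial_apply phi psi)
    = normsq (fun i => dotv phi low * g i + gamma * partial_apply phi perp i).
  apply: eq_bigr => i _; rewrite -partial_apply_tensvD; congr (`|_| ^+ 2).
  by apply: eq_bigr => x _; rewrite psi_def.
rewrite normsqD_orth ?normsqZ ?ng ?mulr1 //.
by rewrite dotvZl dotv_partial_apply perp_g mulr0.
Qed.

Lemma normsq_partial_perp_le :
  normsq (partial_apply phi perp) <= 1 - `|phi (zeros n)| ^+ 2.
Proof.
have perp0 := orth_ket0_tensv_vanish perp_ket0.
apply: le_trans (normsq_partial_apply_le (P := fun x => x != zeros n) phi _) _.
  by move=> x i; rewrite negbK => /eqP ->.
by rewrite nperp mulr1 -phi1 /normsq [X in _ <= X - _](bigD1 (zeros n)) //= addrC addrK.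
Qed.

Lemma dotv_low_weight_le : `|dotv phi low| <= alpha * `|phi (zeros n)|
  + delta * sqrtC (\sum_(x | hweight x == 1%N) `|phi x| ^+ 2)
  + beta * sqrtC (\sum_(x | (1 < hweight x)%N) `|phi x| ^+ 2).
Proof.
have -> : dotv phi low = alpha * (phi (zeros n))^* + delta * dotv phi v1 + beta * dotv phi v2.
  have pw x : (phi x)^* * low x = alpha * ((phi x)^* * @ket0 C n x)
      + delta * ((phi x)^* * v1 x) + beta * ((phi x)^* * v2 x) by rewrite /low; ring.
  rewrite /dotv (eq_bigr _ (fun x _ => pw x)) !big_split /= -!mulr_sumr.
  by rewrite -/(dotv _ _) dotv_ket0.
have dot1 : `|dotv phi v1| <= sqrtC (\sum_(x | hweight x == 1%N) `|phi x| ^+ 2).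
  by apply: normC_le_sqrtC; rewrite -[X in _ <= X]mulr1 -nv1; apply: dotv_supp_le => x /v1_supp.
have dot2 : `|dotv phi v2| <= sqrtC (\sum_(x | (1 < hweight x)%N) `|phi x| ^+ 2).
  apply: normC_le_sqrtC; rewrite -[X in _ <= X]mulr1 -nv2; apply: dotv_supp_le => x.
  by rewrite -leqNgt => /v2_supp.
apply: le_trans (ler_normD _ _) _; apply: lerD; last by rewrite normrM ger0_norm // ler_wpM2l.
apply: le_trans (ler_normD _ _) _; apply: lerD; last by rewrite normrM ger0_norm // ler_wpM2l.
by rewrite normrM ger0_norm // norm_conjC.
Qed.
End Decomposition.

Theorem theorem4p4 (C : numClosedFieldType) (n m : nat)
  (psi : bits n * 'I_m -> C) (v1 v2 : bits n -> C) (g : 'I_m -> C)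
  (perp : bits n * 'I_m -> C) (alpha beta delta gamma c : C) :
  0 <= alpha -> 0 <= beta -> 0 <= delta -> 0 <= gamma ->
  normsq psi = 1 ->
  normsq v1 = 1 -> normsq v2 = 1 -> normsq g = 1 -> normsq perp = 1 ->
  (forall x : bits n, hweight x != 1%N -> v1 x = 0) ->
  (forall x : bits n, (hweight x < 2)%N -> v2 x = 0) ->
  (forall h : 'I_m -> C, dotv (tensv (@ket0 C n) h) perp = 0) ->
  (forall q : bits n -> C, dotv (tensv q g) perp = 0) ->
  (forall p : bits n * 'I_m,
     psi p = tensv (fun x => alpha * @ket0 C n x + delta * v1 x + beta * v2 x) g p
             + gamma * perp p) ->
  alpha ^+ 2 = 2%:R / 3%:R + c -> 0 <= c ->
  forall pi : 'I_n -> bool -> C,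
    (forall k : 'I_n, normsq (pi k) = 1) ->
    normsq (partial_apply (prodstate pi) psi)
    <= (alpha + (if c == 0 then delta
                 else Num.min delta (sqrtC (2%:R / 27%:R) * delta ^+ 2 / c))) ^+ 2.
Proof.
move=> al0 be0 de0 ga0 npsi nv1 nv2 ng nperp v1_supp v2_supp perp_ket0 perp_g psi_def
  al2 c0 pi pi1.
have phi1 := normsq_prodstate pi1.
have sum_ge0 (P : pred (bits n)) : 0 <= \sum_(x | P x) `|prodstate pi x| ^+ 2.
  by apply: sumr_ge0 => x _; apply: exprn_ge0.
rewrite (normsq_partial_psi ga0 ng perp_g psi_def).
apply: (overlap_sq_le (x := `|prodstate pi (zeros n)|)
  (y := sqrtC (\sum_(x | hweight x == 1%N) `|prodstate pi x| ^+ 2))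
  (z := sqrtC (\sum_(x | (1 < hweight x)%N) `|prodstate pi x| ^+ 2)) (be := beta)) => //;
  rewrite ?normr_ge0 ?sqrtC_ge0 ?sum_ge0 ?normsq_ge0 ?sqrtCK //.
- exact: (amplitudes_sqr_sum al0 be0 de0 ga0 nv1 nv2 ng nperp v1_supp v2_supp perp_g
    psi_def npsi).
- by rewrite -phi1 [RHS]normsq_hweight_split.
- exact: prodstate_hweight1_mass_ge.
- exact: dotv_low_weight_le al0 be0 de0 nv1 nv2 v1_supp v2_supp _.
- exact: (normsq_partial_perp_le nperp perp_ket0 phi1).
Qed.
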